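(* Let $R$ be a local ring and $s\in R$ a central element. Then $A\in M_2(R;s)$ is strongly clean if and only if one of the following holds: (1) $A\in U\big(M_2(R;s)\big)$; (2) $I_2-A\in U\big(M_2(R;s)\big)$; (3) $A$ is similar to $\left[\begin{smallmatrix} a&0\\ 0&b\end{smallmatrix}\right]$ for some $a,b\in R$.
   Context: All rings are associative with identity. A ring $R$ is local if $R/J(R)$ is a division ring, where $J(R)$ is the Jacobson radical; $U(T)$ is the group of units of a ring $T$. For a ring $R$ and a central element $s\in R$, $M_2(R;s)$ denotes the ring whose elements are the $2\times 2$ arrays $\left[\begin{smallmatrix} a&b\\ c&d\end{smallmatrix}\right]$ with $a,b,c,d\in R$, with componentwise addition and multiplication $\left[\begin{smallmatrix} a&b\\ c&d\end{smallmatrix}\right]\left[\begin{smallmatrix} a'&b'\\ c'&d'\end{smallmatrix}\right]=\left[\begin{smallmatrix} aa'+s^2bc'&ab'+bd'\\ ca'+dc'&s^2cb'+dd'\end{smallmatrix}\right]$, with identity $I_2$. Two elements $A,B\in M_2(R;s)$ are similar if $B=P^{-1}AP$ for some unit $P$ of $M_2(R;s)$. An element $a$ of a ring $T$ is strongly clean if there is an idempotent $e\in T$ with $ae=ea$ and $a-e\in U(T)$. *)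

From HB Require Import structures.
From mathcomp Require Import all_boot all_algebra.
Set Implicit Arguments. Unset Strict Implicit. Unset Printing Implicit Defensive.
Import GRing.Theory.
Local Open Scope ring_scope.

Definition left_ideal (R : nzRingType) (I : R -> Prop) : Prop :=
  I 0 /\ (forall x y, I x -> I y -> I (x - y)) /\ (forall r x, I x -> I (r * x)).

Definition maximal_left_ideal (R : nzRingType) (I : R -> Prop) : Prop :=
  left_ideal I /\ ~ I 1 /\
  (forall K : R -> Prop, left_ideal K -> ~ K 1 -> (forall x, I x -> K x) ->
     forall x, K x -> I x).

Definition jacobson (R : nzRingType) (x : R) : Prop :=
  forall I : R -> Prop, maximal_left_ideal I -> I x.

(* R is local: R/J(R) is a division ring, i.e. R/J(R) is nonzero and every
   nonzero class x + J(R) has a two-sided inverse y + J(R). *)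
Definition local_ring (R : nzRingType) : Prop :=
  ~ jacobson (1 : R) /\
  forall x : R, ~ jacobson x ->
    exists y : R, jacobson (x * y - 1) /\ jacobson (y * x - 1).

Definition central (R : nzRingType) (s : R) : Prop := forall r : R, s * r = r * s.

Record M2 (R : Type) := mkM2 { m11 : R; m12 : R; m21 : R; m22 : R }.

Section M2ops.
Variables (R : nzRingType) (s : R).

Definition M2add (A B : M2 R) : M2 R :=
  mkM2 (m11 A + m11 B) (m12 A + m12 B) (m21 A + m21 B) (m22 A + m22 B).
Definition M2opp (A : M2 R) : M2 R :=
  mkM2 (- m11 A) (- m12 A) (- m21 A) (- m22 A).
Definition M2sub (A B : M2 R) : M2 R := M2add A (M2opp B).
Definition M2one : M2 R := mkM2 1 0 0 1.
Definition M2mul (A B : M2 R) : M2 R :=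
  mkM2 (m11 A * m11 B + s ^+ 2 * m12 A * m21 B)
       (m11 A * m12 B + m12 A * m22 B)
       (m21 A * m11 B + m22 A * m21 B)
       (s ^+ 2 * m21 A * m12 B + m22 A * m22 B).

Definition M2unit (A : M2 R) : Prop :=
  exists B : M2 R, M2mul A B = M2one /\ M2mul B A = M2one.

Definition M2similar (A B : M2 R) : Prop :=
  exists P Q : M2 R, M2mul P Q = M2one /\ M2mul Q P = M2one /\
    B = M2mul (M2mul Q A) P.

Definition M2strongly_clean (A : M2 R) : Prop :=
  exists e : M2 R, M2mul e e = e /\ M2mul A e = M2mul e A /\
    M2unit (M2sub A e).
End M2ops.

From mathcomp Require Import all_boot all_algebra.
From mathcomp Require Import classical_sets.
From Stdlib Require Import Classical.
(* In a local ring, x or 1 - x is invertible, and x is invertible as soon as it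
   lies outside the Jacobson radical. Hence an idempotent e = [a b; c d] of
   M_2(R;s) with a invertible is either conjugate to diag(1,0) (when 1 - d is
   invertible) or, when 1 - d is radical, invertible by a Schur complement
   argument and thus equal to I_2; applying this to e or to I_2 - e shows that
   every idempotent is 0, I_2, or conjugate to diag(1,0) or diag(0,1). A matrix
   commuting with such an idempotent is then similar to one commuting with
   diag(1,0), that is, to a diagonal matrix. Conversely, diagonal matrices are
   strongly clean entrywise, and strong cleanness is invariant under similarity. *)

Set Implicit Arguments. Unset Strict Implicit. Unset Printing Implicit Defensive.
Import GRing.Theory.
Local Open Scope ring_scope.

Section Jacobson.
Variable R : nzRingType.
Implicit Types x y r j : R.

Lemma jacobson0 : jacobson (0 : R).
Proof. by move=> I [[]]. Qed.

Lemma jacobsonB x y : jacobson x -> jacobson y -> jacobson (x - y).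
Proof. by move=> Jx Jy I MI; case: (MI) => [[_ [+ _]] _]; apply; [apply: Jx | apply: Jy]. Qed.

Lemma jacobsonMl r x : jacobson x -> jacobson (r * x).
Proof. by move=> Jx I MI; case: (MI) => [[_ [_ +]] _]; apply; apply: Jx. Qed.

Lemma jacobsonN x : jacobson x -> jacobson (- x).
Proof. by move=> Jx; rewrite -sub0r; apply: jacobsonB Jx; apply: jacobson0. Qed.

Lemma jacobsonD x y : jacobson x -> jacobson y -> jacobson (x + y).
Proof. by move=> Jx Jy; rewrite -[y]opprK; apply: jacobsonB Jx (jacobsonN Jy). Qed.

(* Zorn's lemma applied to the left ideals containing [R y] but not [1]. *)
Lemma maximal_left_ideal_of_not_linv y : ~ (exists v, v * y = 1) ->
  exists M : R -> Prop, maximal_left_ideal M /\ M y.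
Proof.
move=> nlinv.
pose P (A : set R) := (forall x z, A x -> A z -> A (x - z)) /\
  (forall r x, A x -> A (r * x)) /\ ~ A 1 /\ (forall x, A x -> A y).
have P_Ry : P (fun x => exists r, x = r * y).
  split; first by move=> _ _ [r ->] [r' ->]; exists (r - r'); rewrite mulrBl.
  split; first by move=> r _ [r' ->]; exists (r * r'); rewrite mulrA.
  split; first by move=> [r r1]; apply: nlinv; exists r.
  by move=> _ _; exists 1; rewrite mul1r.
have [M [PM Mmax]] : exists A, P A /\ forall B, proper A B -> ~ P B.
  apply: Zorn_bigcup => F FP Ftot; split.
    move=> x z [X FX Xx] [Z FZ Zz].
    have [XZ|ZX] := Ftot X Z FX FZ.
      by exists Z => //; apply: (FP Z FZ).1 => //; apply: XZ.
    by exists X => //; apply: (FP X FX).1 => //; apply: ZX.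
  split; first by move=> r x [X FX Xx]; exists X => //; apply: (FP X FX).2.1.
  split; first by move=> [X FX X1]; apply: (FP X FX).2.2.1.
  by move=> x [X FX Xx]; exists X => //; apply: (FP X FX).2.2.2 Xx.
have [Msub [Mmul [M1 My]]] := PM.
have {}My : M y.
  apply: NNPP => nMy; apply: (Mmax _ _ P_Ry); split.
    by move=> x Mx; exfalso; apply: nMy; apply: My Mx.
  by move=> RyM; apply: nMy; apply: RyM; exists 1; rewrite mul1r.
exists M; split => //; split; first by split; [rewrite -(subrr y); apply: Msub | split].
split => // K [K0 [Ksub Kmul]] K1 MK x Kx; apply: NNPP => nMx.
apply: (Mmax K); first by split => // KM; apply: nMx; apply: KM.
by do 3!split => //; move=> z _; apply: MK My.
Qed.

Lemma jacobson_linv1B j : jacobson j -> exists v, v * (1 - j) = 1.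
Proof.
move=> Jj; apply: NNPP => /maximal_left_ideal_of_not_linv [M [MM M1j]].
have Mj := Jj M MM; case: MM => [[_ [Msub _]] [M1 _]]; apply: M1.
have := Msub _ _ M1j (Msub _ _ (Msub _ _ Mj Mj) Mj).
by rewrite subrr sub0r opprK subrK.
Qed.

Definition invertible x := exists y, x * y = 1 /\ y * x = 1.

Hypothesis local : local_ring R.

Lemma not_jacobson_linv x : ~ jacobson x -> exists l, l * x = 1.
Proof.
move=> nJx; have [y [_ Jyx]] := local.2 x nJx.
have [w w1] := jacobson_linv1B (jacobsonN Jyx).
by exists (w * y); rewrite -mulrA -[RHS]w1 opprB subKr.
Qed.

Lemma invertible_not_jacobson x : invertible x -> ~ jacobson x.
Proof. by move=> [y [_ yx1]] Jx; apply: local.1; rewrite -yx1; apply: jacobsonMl. Qed.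

Lemma not_jacobson_invertible x : ~ jacobson x -> invertible x.
Proof.
move=> nJx; have [l lx1] := not_jacobson_linv nJx.
have nJl : ~ jacobson l.
  move=> Jl; have [v v1] := jacobson_linv1B (jacobsonMl x Jl).
  have : v * (1 - x * l) * x = x by rewrite v1 mul1r.
  rewrite -mulrA mulrBl mul1r -mulrA lx1 mulr1 subrr mulr0 => x0.
  by move: lx1; rewrite -x0 mulr0 => /esym/eqP; rewrite oner_eq0.
have [m ml1] := not_jacobson_linv nJl.
have xm : x = m by rewrite -[RHS]mulr1 -lx1 mulrA ml1 mul1r.
by exists l; split => //; rewrite xm ml1.
Qed.

Lemma invertible_or_jacobson x : invertible x \/ jacobson x.
Proof.
have [Jx|nJx] := classic (jacobson x); first by right.
by left; apply: not_jacobson_invertible.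
Qed.

Lemma invertibleBjacobson d j : invertible d -> jacobson j -> invertible (d - j).
Proof.
move=> Ud Jj; apply: not_jacobson_invertible => Jdj.
by apply: (invertible_not_jacobson Ud); rewrite -(subrK j d); apply: jacobsonD.
Qed.

Lemma exists_01_invertibleB x : exists e, (e = 0 \/ e = 1) /\ invertible (x - e).
Proof.
have [Ux|Jx] := invertible_or_jacobson x; first by exists 0; rewrite subr0; split; [left|].
exists 1; split; first by right.
have -> : x - 1 = -1 - - x by rewrite opprK addrC.
apply: invertibleBjacobson (jacobsonN Jx).
by exists (-1); rewrite mulrNN mulr1.
Qed.

End Jacobson.

Section M2Ring.
Variables (R : nzRingType) (s : R).
Hypothesis s_central : central s.
Implicit Types X Y W A e : M2 R.

Local Notation mul := (M2mul s).
Local Notation I := (M2one R).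
Local Notation Z := (mkM2 0 0 0 (0 : R)).
Local Notation E11 := (mkM2 1 0 0 (0 : R)).

Lemma M2mulA X Y W : mul (mul X Y) W = mul X (mul Y W).
Proof.
have s2C r : s ^+ 2 * r = r * s ^+ 2 by rewrite expr2 -mulrA s_central !mulrA s_central.
case: X Y W => [x1 x2 x3 x4] [y1 y2 y3 y4] [w1 w2 w3 w4].
rewrite /M2mul /=; move: (s ^+ 2) s2C => t tC.
by congr mkM2; rewrite !(mulrDl, mulrDr, mulrA) -?[_ * t]tC ?mulrA addrACA.
Qed.

Lemma M2mul1l X : mul I X = X.
Proof. by case: X => *; rewrite /M2mul /=; congr mkM2; rewrite !(mul1r, mul0r, mulr0, addr0, add0r). Qed.

Lemma M2mul1r X : mul X I = X.
Proof. by case: X => *; rewrite /M2mul /=; congr mkM2; rewrite !(mulr1, mul0r, mulr0, addr0, add0r). Qed.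

Lemma M2mulBr X Y W : mul X (M2sub Y W) = M2sub (mul X Y) (mul X W).
Proof.
case: X Y W => [x1 x2 x3 x4] [y1 y2 y3 y4] [w1 w2 w3 w4].
by rewrite /M2mul /M2sub /M2add /M2opp /=; congr mkM2; rewrite !(mulrDr, mulrN) opprD addrACA.
Qed.

Lemma M2mulBl X Y W : mul (M2sub X Y) W = M2sub (mul X W) (mul Y W).
Proof.
case: X Y W => [x1 x2 x3 x4] [y1 y2 y3 y4] [w1 w2 w3 w4].
by rewrite /M2mul /M2sub /M2add /M2opp /=; congr mkM2;
  rewrite !(mulrDl, mulrDr, mulNr, mulrN) opprD addrACA.
Qed.

Lemma M2subr0 X : M2sub X Z = X.
Proof. by case: X => *; rewrite /M2sub /M2add /M2opp /=; congr mkM2; rewrite subr0. Qed.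

Lemma M2subrr X : M2sub X X = Z.
Proof. by case: X => *; rewrite /M2sub /M2add /M2opp /=; congr mkM2; rewrite subrr. Qed.

Lemma M2subKr X Y : M2sub X (M2sub X Y) = Y.
Proof.
by case: X Y => [? ? ? ?] [? ? ? ?]; rewrite /M2sub /M2add /M2opp /=; congr mkM2;
  rewrite opprD opprK addrA subrr add0r.
Qed.

Lemma M2oppB X Y : M2opp (M2sub X Y) = M2sub Y X.
Proof. by case: X Y => [? ? ? ?] [? ? ? ?]; rewrite /M2sub /M2add /M2opp /=; congr mkM2; rewrite opprB. Qed.

Lemma M2idemB e : mul e e = e -> mul (M2sub I e) (M2sub I e) = M2sub I e.
Proof.
by move=> ee; rewrite M2mulBl M2mul1l M2mulBr M2mul1r ee M2subrr M2subr0.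
Qed.

Lemma M2commuteB1 A e : mul A e = mul e A -> mul A (M2sub I e) = mul (M2sub I e) A.
Proof. by move=> Ae; rewrite M2mulBr M2mulBl M2mul1l M2mul1r Ae. Qed.

Lemma M2unitM X Y : M2unit s X -> M2unit s Y -> M2unit s (mul X Y).
Proof.
move=> [X' [XX' X'X]] [Y' [YY' Y'Y]]; exists (mul Y' X'); split.
  by rewrite M2mulA -(M2mulA Y) YY' M2mul1l.
by rewrite M2mulA -(M2mulA X') X'X M2mul1l.
Qed.

Lemma M2unitN X : M2unit s X -> M2unit s (M2opp X).
Proof.
case: X => x1 x2 x3 x4 [[y1 y2 y3 y4]]; rewrite /M2mul /M2opp /= => -[XY YX].
by exists (mkM2 (- y1) (- y2) (- y3) (- y4)); rewrite /M2mul /= !(mulrN, mulNr, opprK).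
Qed.

Lemma M2unit_lr X L Rr : mul L X = I -> mul X Rr = I -> M2unit s X.
Proof.
move=> LX XR; exists Rr; split => //.
suff -> : Rr = L by [].
by rewrite -[L]M2mul1r -XR -M2mulA LX M2mul1l.
Qed.

Lemma M2idem_unit_eq1 e : mul e e = e -> M2unit s e -> e = I.
Proof. by move=> ee [e' [ee' _]]; rewrite -[e]M2mul1r -ee' -M2mulA ee. Qed.

Lemma M2unit_diag x y : invertible x -> invertible y -> M2unit s (mkM2 x 0 0 y).
Proof.
move=> [x' [xx' x'x]] [y' [yy' y'y]]; exists (mkM2 x' 0 0 y'); rewrite /M2mul /=.
by rewrite !(mulr0, mul0r, addr0, add0r, xx', x'x, yy', y'y).
Qed.

Lemma M2unit_lowtri x : M2unit s (mkM2 1 0 x 1).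
Proof.
exists (mkM2 1 0 (- x) 1); rewrite /M2mul /=.
by rewrite !(mulr1, mul1r, mulr0, mul0r, addr0, add0r, subrr, addNr).
Qed.

Lemma M2unit_uptri x : M2unit s (mkM2 1 x 0 1).
Proof.
exists (mkM2 1 (- x) 0 1); rewrite /M2mul /=.
by rewrite !(mulr1, mul1r, mulr0, mul0r, addr0, add0r, subrr, addNr).
Qed.

Lemma M2unit_schur a a' b c d : a * a' = 1 -> a' * a = 1 ->
  invertible (d - s ^+ 2 * c * a' * b) -> M2unit s (mkM2 a b c d).
Proof.
move=> aa' a'a Ud.
have -> : mkM2 a b c d = mul (mul (mkM2 1 0 (c * a') 1)
    (mkM2 a 0 0 (d - s ^+ 2 * c * a' * b))) (mkM2 1 (a' * b) 0 1).
  rewrite /M2mul /=; congr mkM2; rewrite ?(mulr1, mul1r, mulr0, mul0r, addr0, add0r) //.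
  - by rewrite mulrA aa' mul1r.
  - by rewrite -mulrA a'a mulr1.
  - by rewrite -(mulrA c a' a) a'a mulr1 (mulrA _ a' b) addrC subrK.
apply: M2unitM (M2unit_uptri _); apply: M2unitM (M2unit_lowtri _) _.
by apply: M2unit_diag => //; exists a'.
Qed.

Section Conjugation.
Variables P Q : M2 R.
Hypothesis PQ : mul P Q = I.

Lemma M2conjM X Y : mul (mul Q (mul X Y)) P = mul (mul (mul Q X) P) (mul (mul Q Y) P).
Proof. by rewrite !M2mulA -(M2mulA P Q) PQ M2mul1l. Qed.

Lemma M2conjB X Y : mul (mul Q (M2sub X Y)) P = M2sub (mul (mul Q X) P) (mul (mul Q Y) P).
Proof. by rewrite M2mulBr M2mulBl. Qed.

Lemma M2unit_conj X : mul Q P = I -> M2unit s X -> M2unit s (mul (mul Q X) P).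
Proof. by move=> QP UX; apply: M2unitM (M2unitM _ UX) _; [exists P | exists Q]. Qed.

End Conjugation.

Lemma M2similar_sym A B : M2similar s A B -> M2similar s B A.
Proof.
move=> [P [Q [PQ [QP ->]]]]; exists Q, P; do 2!split => //.
by rewrite !M2mulA PQ M2mul1r -M2mulA PQ M2mul1l.
Qed.

Lemma M2similar_strongly_clean A B :
  M2similar s A B -> M2strongly_clean s A -> M2strongly_clean s B.
Proof.
move=> [P [Q [PQ [QP ->]]]] [e [ee [Ae UAe]]].
exists (mul (mul Q e) P); split; first by rewrite -M2conjM // ee.
split; first by rewrite -!M2conjM // Ae.
by rewrite -M2conjB; apply: M2unit_conj.
Qed.

Lemma M2commute_E11 X : mul X E11 = mul E11 X -> X = mkM2 (m11 X) 0 0 (m22 X).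
Proof.
case: X => x1 x2 x3 x4; rewrite /M2mul /= !(mulr0, mul0r, mulr1, mul1r, addr0, add0r).
by case=> <- ->.
Qed.

Lemma M2commute_similar_E11 A e : mul A e = mul e A -> M2similar s e E11 ->
  exists a b, M2similar s A (mkM2 a 0 0 b).
Proof.
move=> Ae [P [Q [PQ [QP E11e]]]].
have CE : mul (mul (mul Q A) P) E11 = mul E11 (mul (mul Q A) P).
  by rewrite E11e -!M2conjM // Ae.
by exists (m11 (mul (mul Q A) P)), (m22 (mul (mul Q A) P)), P, Q; do 2!split => //;
  apply/esym/M2commute_E11.
Qed.

Section Idempotent.
Variables a b c d : R.
Hypothesis ee : mul (mkM2 a b c d) (mkM2 a b c d) = mkM2 a b c d.

Let idem11 : a * a + s ^+ 2 * b * c = a. Proof. by case: ee. Qed.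
Let idem12 : a * b + b * d = b. Proof. by case: ee. Qed.
Let idem21 : c * a + d * c = c. Proof. by case: ee. Qed.
Let idem22 : s ^+ 2 * c * b + d * d = d. Proof. by case: ee. Qed.
Let idem12B : b - b * d = a * b. Proof. by rewrite -{1}idem12 addrK. Qed.
Let idem21B : c - d * c = c * a. Proof. by rewrite -{1}idem21 addrK. Qed.
Let idem22B : d - d * d = s ^+ 2 * c * b. Proof. by rewrite -{1}idem22 addrK. Qed.

Ltac idem_solve := rewrite /M2mul /=; congr mkM2;
  rewrite ?(mulr0, mul0r, mulr1, addr0, add0r, mulrN, mulNr, mulrBr, mulrBl, mul1r, opprK, oppr0) //;
  rewrite ?(idem12B, idem21B, idem22B) ?(addNr, subrr, subrK) //; by rewrite addrC subrK.

(* The columns of [P] are the first column of [e] and the second column of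
   [I - e]. *)
Let P := mkM2 a (- b) c (1 - d).
Let Y := mkM2 a b (- c) (1 - d).

Let eP : mul (mkM2 a b c d) P = mul P E11. Proof. idem_solve. Qed.
Let PY : mul P Y = mkM2 a 0 0 (1 - d). Proof. idem_solve. Qed.
Let YP : mul Y P = mkM2 a 0 0 (1 - d). Proof. idem_solve. Qed.

Lemma M2idem_similar_E11 : invertible a -> invertible (1 - d) ->
  M2similar s (mkM2 a b c d) E11.
Proof.
move=> Ua U1d; have [D' [DD' D'D]] := M2unit_diag Ua U1d.
have [Q [PQ QP]] : M2unit s P.
  apply: (M2unit_lr (L := mul D' Y) (Rr := mul Y D')).
  - by rewrite M2mulA YP.
  - by rewrite -M2mulA PY.
by exists P, Q; do 2!split => //; rewrite M2mulA eP -M2mulA QP M2mul1l.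
Qed.

Hypothesis local : local_ring R.

Lemma M2idem_eq1 : invertible a -> jacobson (1 - d) -> mkM2 a b c d = I.
Proof.
move=> [a' [aa' a'a]] J1d.
have bE : b = a' * b * (1 - d) by rewrite -mulrA mulrBr mulr1 idem12B mulrA a'a mul1r.
have Jt : jacobson (s ^+ 2 * c * a' * b) by rewrite bE !mulrA; apply: jacobsonMl.
apply: M2idem_unit_eq1 => //; apply: M2unit_schur aa' a'a _.
have -> : d - s ^+ 2 * c * a' * b = 1 - ((1 - d) + s ^+ 2 * c * a' * b).
  by rewrite opprD addrA subKr.
by apply: invertibleBjacobson => //; [exists 1; rewrite mulr1 | apply: jacobsonD].
Qed.

End Idempotent.

Hypothesis local : local_ring R.

Lemma M2idem_eq1_or_similar_E11 e : mul e e = e -> invertible (m11 e) ->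
  e = I \/ M2similar s e E11.
Proof.
case: e => a b c d /= ee Ua.
have [U1d|J1d] := invertible_or_jacobson local (1 - d).
  by right; apply: M2idem_similar_E11.
by left; apply: M2idem_eq1.
Qed.

Lemma M2idem_cases e : mul e e = e ->
  [\/ e = Z, e = I, M2similar s e E11 | M2similar s (M2sub I e) E11].
Proof.
move=> ee; have [Ua|Ja] := invertible_or_jacobson local (m11 e).
  by have [|] := M2idem_eq1_or_similar_E11 ee Ua; [constructor 2 | constructor 3].
have U1a : invertible (m11 (M2sub I e)).
  by apply: invertibleBjacobson Ja => //; exists 1; rewrite mulr1.
have [IeI|] := M2idem_eq1_or_similar_E11 (M2idemB ee) U1a; last by constructor 4.
by constructor 1; rewrite -(M2subKr I e) IeI M2subrr.
Qed.

Lemma M2strongly_clean_diag a b : M2strongly_clean s (mkM2 a 0 0 b).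
Proof.
have idem01 (x : R) : x = 0 \/ x = 1 -> x * x = x by case=> ->; rewrite ?mulr0 ?mulr1.
have comm01 (x y : R) : x = 0 \/ x = 1 -> x * y = y * x.
  by case=> ->; rewrite ?mulr0 ?mul0r ?mulr1 ?mul1r.
have [ea [ea01 Ua]] := exists_01_invertibleB local a.
have [eb [eb01 Ub]] := exists_01_invertibleB local b.
exists (mkM2 ea 0 0 eb); rewrite /M2mul /M2sub /M2add /M2opp /=.
rewrite !(mulr0, mul0r, addr0, add0r, oppr0) !idem01 // (comm01 ea) // (comm01 eb) //.
by do 2!split => //; apply: M2unit_diag.
Qed.

Lemma M2unit_strongly_clean A : M2unit s A -> M2strongly_clean s A.
Proof.
move=> UA; exists Z; rewrite M2subr0; split; last split => //.
  by rewrite /M2mul /= !(mulr0, addr0).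
by case: A {UA} => *; rewrite /M2mul /= !(mulr0, mul0r, addr0).
Qed.

Lemma M2unit1B_strongly_clean A : M2unit s (M2sub I A) -> M2strongly_clean s A.
Proof.
move=> U1A; exists I; split; first exact: M2mul1l.
split; first by rewrite M2mul1l M2mul1r.
by rewrite -M2oppB; apply: M2unitN.
Qed.

End M2Ring.

Theorem corollary2p12 (R : nzRingType) (s : R) (A : M2 R) :
  local_ring R -> central s ->
  (M2strongly_clean s A <->
   (M2unit s A \/ M2unit s (M2sub (M2one R) A) \/
    exists a b : R, M2similar s A (mkM2 a 0 0 b))).
Proof.
move=> local s_central; split.
- move=> [e [ee [Ae UAe]]].
  have [e0|e1|eE11|eE11] := M2idem_cases s_central local ee.
  + by left; rewrite e0 M2subr0 in UAe.
  + by right; left; rewrite -M2oppB -e1; apply: M2unitN.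
  + by right; right; apply: (M2commute_similar_E11 s_central) Ae eE11.
  + by right; right; apply: (M2commute_similar_E11 s_central) (M2commuteB1 Ae) eE11.
- move=> [UA | [U1A | [a [b Adiag]]]].
  + exact: M2unit_strongly_clean.
  + exact: M2unit1B_strongly_clean.
  + apply: (M2similar_strongly_clean s_central) (M2similar_sym s_central Adiag) _.
    exact: M2strongly_clean_diag.
Qed.
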